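(* Consider the one-stage ANC game described in the context. Suppose that for every $x\in\mathbb{R}^n$ and $a\in\mathcal{A}$ the functions $u\mapsto\Sigma(F(x,0),u,a)$ and $u\mapsto\Sigma(F(x,u),u,a)$ are continuous, coercive and convex on $\mathbb{R}^m$, and that for every $x\in\mathbb{R}^n$, $s\in\mathcal{F}$ the function $H(u)\triangleq h^{x,s}(u)=[h^{x,s}_1(u),\dots,h^{x,s}_N(u)]'$ satisfies: there exist $u^*\in\mathbb{R}^m$ and a set $\mathcal{G}\subset\mathcal{A}$ with $|\mathcal{G}|\ge2$ such that (a) $H_i(u^* )=\max_{1\le j\le N}H_j(u^* )$ for all $i\in\mathcal{G}$; (b) for all $u\ne u^*$ there exists $i\in\mathcal{G}$ with $H_i(u)>H_i(u^* )$; (c) $u^*$ is not a minimum of any $H_i$, $i\in\mathcal{G}$. Then the one-stage ANC game has a non-pure saddle point $(u^*,p^* )$.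
   Context: Setting (one-stage ANC game). Let $\mathcal{F}=\{1,\dots,|\mathcal{F}|\}$ be a finite set of transmission regimes and $\mathcal{A}=\{1,\dots,N\}$ a finite set of jammer actions. For each $a\in\mathcal{A}$ let $P(a)$ be an $|\mathcal{F}|\times|\mathcal{F}|$ row-stochastic matrix, and let $q=(q_1,\dots,q_{|\mathcal{F}|})'\in[0,1]^{|\mathcal{F}|}$. Let $F:\mathbb{R}^n\times\mathbb{R}^m\to\mathbb{R}^n$, $\sigma^0:\mathbb{R}^n\times\mathbb{R}^m\to\mathbb{R}$, $\sigma^1:\mathbb{R}^n\to\mathbb{R}$, $g^0:\mathcal{A}\times\mathcal{F}\to\mathbb{R}$. For a plant state $x$ and regime $s$, the controller chooses $u\in\mathbb{R}^m$, the jammer chooses $p\in\mathcal{S}_{N-1}$ (unit simplex in $\mathbb{R}^N$); $a$ is drawn according to $p$, $s^+$ with $\mathrm{Pr}(s^+=i)=P_{si}(a)$, $b\in\{0,1\}$ with $\mathrm{Pr}(b=1\mid s^+)=q_{s^+}$, and $x^+=F(x,bu)$. Payoff $\Sigma(x^+,u,a)=\sigma^0(x,u)+\sigma^1(x^+)-g^0(a,s)$, with expectation $p'h^{x,s}(u)$ where $h^{x,s}_i(u)=(P(i)q)_s\Sigma(F(x,u),u,i)+(1-(P(i)q)_s)\Sigma(F(x,0),u,i)$. A saddle point is $(u^*,p^* )\in\mathbb{R}^m\times\mathcal{S}_{N-1}$ with $p'h^{x,s}(u^* )\le(p^* )'h^{x,s}(u^* )\le(p^* )'h^{x,s}(u)$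 for all $u,p$ (hence $(p^* )'h^{x,s}(u^* )=\inf_u\sup_pp'h^{x,s}(u)=\sup_p\inf_up'h^{x,s}(u)$). It is non-pure if $p^*$ has at least two positive components. A function $h:\mathbb{R}^m\to\mathbb{R}$ is coercive if $h(u)\ge\eta(\|u\|)$ for some $\eta$ with $\eta(y)\to+\infty$ as $y\to+\infty$. *)

From HB Require Import structures.
From mathcomp Require Import all_boot all_order all_algebra.
From mathcomp Require Import all_classical all_reals all_analysis.
Set Implicit Arguments. Unset Strict Implicit. Unset Printing Implicit Defensive.
Import Order.TTheory GRing.Theory Num.Theory.
Import numFieldNormedType.Exports.
Local Open Scope ring_scope.
Local Open Scope classical_set_scope.

(* Regimes F = 'I_K, jammer actions A = 'I_N. *)

Definition row_stochastic (R : realType) (K : nat) (M : 'M[R]_K) : Prop :=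
  (forall i j, 0 <= M i j) /\ (forall i, \sum_j M i j = 1).

Definition in_simplex (R : realType) (N : nat) (p : 'I_N -> R) : Prop :=
  (forall i, 0 <= p i) /\ \sum_i p i = 1.

Definition coercive (R : realType) (m : nat) (h : 'rV[R]_m -> R) : Prop :=
  exists eta : R -> R, (eta @ +oo --> +oo) /\ (forall u, eta `|u| <= h u).

Definition convex_fun (R : realType) (m : nat) (h : 'rV[R]_m -> R) : Prop :=
  forall (u v : 'rV[R]_m) (t : R), 0 <= t -> t <= 1 ->
    h (t *: u + (1 - t) *: v) <= t * h u + (1 - t) * h v.

Definition Sigma (R : realType) (n m K N : nat)
  (sigma0 : 'rV[R]_n -> 'rV[R]_m -> R) (sigma1 : 'rV[R]_n -> R)
  (g0 : 'I_N -> 'I_K -> R) (x : 'rV[R]_n) (s : 'I_K)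
  (xp : 'rV[R]_n) (u : 'rV[R]_m) (a : 'I_N) : R :=
  sigma0 x u + sigma1 xp - g0 a s.

Definition Pq (R : realType) (K N : nat) (P : 'I_N -> 'M[R]_K) (q : 'I_K -> R)
  (i : 'I_N) (s : 'I_K) : R := \sum_j P i s j * q j.

Definition hxs (R : realType) (n m K N : nat)
  (P : 'I_N -> 'M[R]_K) (q : 'I_K -> R) (F : 'rV[R]_n -> 'rV[R]_m -> 'rV[R]_n)
  (sigma0 : 'rV[R]_n -> 'rV[R]_m -> R) (sigma1 : 'rV[R]_n -> R)
  (g0 : 'I_N -> 'I_K -> R) (x : 'rV[R]_n) (s : 'I_K)
  (u : 'rV[R]_m) (i : 'I_N) : R :=
  Pq P q i s * Sigma sigma0 sigma1 g0 x s (F x u) u i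
  + (1 - Pq P q i s) * Sigma sigma0 sigma1 g0 x s (F x 0) u i.

Definition expected (R : realType) (m N : nat) (H : 'rV[R]_m -> 'I_N -> R)
  (p : 'I_N -> R) (u : 'rV[R]_m) : R := \sum_i p i * H u i.

Definition saddle_point (R : realType) (m N : nat) (H : 'rV[R]_m -> 'I_N -> R)
  (us : 'rV[R]_m) (ps : 'I_N -> R) : Prop :=
  in_simplex ps /\
  (forall p, in_simplex p -> expected H p us <= expected H ps us) /\
  (forall u, expected H ps us <= expected H ps u).

Definition non_pure (R : realType) (N : nat) (p : 'I_N -> R) : Prop :=
  exists i j : 'I_N, i != j /\ 0 < p i /\ 0 < p j.

(* A theorem of the alternative for convex functions (Fan, Glicksberg and
   Hoffman): if the convex functions f_i, i in G, are never all negative at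
   the same point, some convex combination of them is nonnegative everywhere.
   For two functions the weight is obtained as a supremum; in general one
   argues by induction on |G|, merging two of the functions into a convex
   combination of them that works on the convex set where all the others are
   negative.
   Applied to f_i(u) = H_i(u) - H_i(us), condition (b) supplies the
   hypothesis, and the weights p make us a best response to p; p is a best
   response to us since it is supported on the maximisers (a) of H(us); and by
   (c) no single f_i is nonnegative everywhere, so p is not pure. *)
From HB Require Import structures.
From mathcomp Require Import all_boot all_order all_algebra.
From mathcomp Require Import all_classical all_reals all_analysis.
From mathcomp Require Import ring lra.
Set Implicit Arguments.
Unset Strict Implicit.
Unset Printing Implicit Defensive.
Import Order.TTheory GRing.Theory Num.Theory.
Import numFieldNormedType.Exports.
Local Open Scope ring_scope.

Section RealCombinations.
Variable R : realType.

Lemma comb_lt0 (a b t : R) : 0 <= t <= 1 -> a < 0 -> b < 0 ->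
  t * a + (1 - t) * b < 0.
Proof.
move=> /andP[t0 t1] a0 b0.
have [->|tn0] := eqVneq t 0; first by rewrite mul0r add0r subr0 mul1r.
have ta : t * a < 0 by rewrite pmulr_rlt0 // lt0r tn0.
have tb : (1 - t) * b <= 0 by rewrite mulr_ge0_le0 ?subr_ge0 // ltW.
lra.
Qed.

Lemma comb_root (a b : R) : b <= 0 <= a ->
  exists2 t, 0 <= t <= 1 & t * a + (1 - t) * b = 0.
Proof.
move=> /andP[b0 a0]; have [ab|ab] := eqVneq (b - a) 0.
  by exists 0; rewrite ?lexx ?ler01 //; lra.
exists (b / (b - a)); last by field.
have ba : b - a < 0 by rewrite lt_neqAle ab /=; lra.
by rewrite ler_ndivlMr // ler_ndivrMr //; apply/andP; split; lra.
Qed.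

End RealCombinations.

Section ConvexFun.
Variables (R : realType) (m : nat).
Implicit Types (f g : 'rV[R]_m -> R) (u v : 'rV[R]_m).

Lemma convex_fun_comb f g a b : 0 <= a -> 0 <= b ->
  convex_fun f -> convex_fun g -> convex_fun (fun u => a * f u + b * g u).
Proof.
move=> a0 b0 cf cg u v t t0 t1.
have hf := ler_wpM2l a0 (cf u v t t0 t1).
have hg := ler_wpM2l b0 (cg u v t t0 t1).
have -> : t * (a * f u + b * g u) + (1 - t) * (a * f v + b * g v) =
  a * (t * f u + (1 - t) * f v) + b * (t * g u + (1 - t) * g v) by ring.
exact: lerD.
Qed.

Lemma convex_fun_addr f c : convex_fun f -> convex_fun (fun u => f u + c).
Proof.
move=> cf u v t t0 t1; have := cf u v t t0 t1.
have -> : t * (f u + c) + (1 - t) * (f v + c) = t * f u + (1 - t) * f v + c by ring.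
by rewrite lerD2r.
Qed.

Lemma convex_fun_lt0 f u v t : convex_fun f -> 0 <= t <= 1 ->
  f u < 0 -> f v < 0 -> f (t *: u + (1 - t) *: v) < 0.
Proof.
move=> cf /[dup] t01 /andP[t0 t1] fu fv.
by apply: le_lt_trans (cf u v t t0 t1) _; apply: comb_lt0.
Qed.

End ConvexFun.

Section TwoConvexFunctions.
Variables (R : realType) (m : nat) (f g : 'rV[R]_m -> R) (Q : set 'rV[R]_m).
Hypotheses (f_convex : convex_fun f) (g_convex : convex_fun g).
Hypothesis Q_convex : forall u v t, 0 <= t <= 1 -> Q u -> Q v ->
  Q (t *: u + (1 - t) *: v).
Hypothesis fg_cover : forall u, Q u -> 0 <= f u \/ 0 <= g u.

Let mix l u := l * f u + (1 - l) * g u.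

Let mixE l u : mix l u = g u + l * (f u - g u).
Proof. by rewrite /mix; ring. Qed.

(* On the segment [u, v] pick the point w where the convex combinations of
   f and of g agree; convexity then makes both f w and g w negative. *)
Lemma mix_lt0_cross l u v : Q u -> Q v -> mix l u < 0 -> mix l v < 0 ->
  g u <= f u -> f v <= g v -> False.
Proof.
move=> Qu Qv hu hv du dv.
have [t t01 ht] : exists2 t, 0 <= t <= 1 &
    t * (f u - g u) + (1 - t) * (f v - g v) = 0.
  by apply: comb_root; apply/andP; split; lra.
have /andP[t0 t1] := t01.
set A := t * f u + (1 - t) * f v; set B := t * g u + (1 - t) * g v.
have AB : A = B by rewrite /A /B; lra.
have A0 : A < 0.
  have -> : A = t * mix l u + (1 - t) * mix l v.
    by transitivity (l * A + (1 - l) * B); [rewrite -AB | rewrite /mix /A /B]; ring.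
  exact: comb_lt0.
have fw := f_convex u v t0 t1; have gw := g_convex u v t0 t1.
have [] := fg_cover (Q_convex t01 Qu Qv); rewrite -/A -/B in fw gw *; lra.
Qed.

(* Points where g < f bound l from below, points where f < g bound it from
   above, and [mix_lt0_cross] says no lower bound exceeds an upper bound:
   the supremum of the lower bounds fits. *)
Lemma convex_mix_ge0 :
  exists2 l, 0 <= l <= 1 & forall u, Q u -> 0 <= l * f u + (1 - l) * g u.
Proof.
pose E : set R := fun l => l = 0 \/ exists u, [/\ Q u, g u < f u & mix l u < 0].
have E_le1 l : E l -> l <= 1.
  case=> [->|[u [Qu fgu hu]]]; first exact: ler01.
  rewrite leNgt; apply/negP => l1; move: hu; rewrite mixE.
  have : 0 < (l - 1) * (f u - g u) by rewrite mulr_gt0 ?subr_gt0.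
  by have [] := fg_cover Qu; lra.
have E_sup : has_sup E by split; [exists 0; left | exists 1 => l /E_le1].
set lam := sup E.
have lam_ub l : E l -> l <= lam by exact: sup_upper_bound.
have lam0 : 0 <= lam by apply: lam_ub; left.
have lam1 : lam <= 1 by apply: ge_sup; [exists 0; left | exact: E_le1].
exists lam => [|u Qu]; first by apply/andP.
rewrite -/(mix lam u) leNgt; apply/negP => hu.
have [fgu|gfu|fgu] := ltgtP (g u) (f u).
- pose e := - mix lam u / (2 * (f u - g u)).
  have e0 : 0 < e by rewrite divr_gt0 ?mulr_gt0 ?subr_gt0 ?oppr_gt0.
  have ee : e * (f u - g u) = - mix lam u / 2.
    by rewrite /e; field; rewrite subr_eq0 gt_eqF.
  have he : mix (lam + e) u < 0.
    have -> : mix (lam + e) u = mix lam u + e * (f u - g u) by rewrite !mixE; ring.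
    lra.
  have := lam_ub (lam + e) (or_intror (ex_intro _ u (And3 Qu fgu he))); lra.
- pose e := - mix lam u / (g u - f u).
  have e0 : 0 < e by rewrite divr_gt0 ?subr_gt0 ?oppr_gt0.
  have [l El lt_l] := sup_adherent e0 E_sup.
  have hl : mix l u < 0.
    have ee : e * (g u - f u) = - mix lam u.
      by rewrite /e; field; rewrite subr_eq0 gt_eqF.
    have : (lam - l) * (g u - f u) < e * (g u - f u).
      by rewrite ltr_pM2r ?subr_gt0 //; rewrite -/lam in lt_l; lra.
    have -> : mix l u = mix lam u + (lam - l) * (g u - f u) by rewrite !mixE; ring.
    lra.
  case: El => [l0|[v [Qv fgv hv]]].
    by move: hl; rewrite l0 mixE; have [] := fg_cover Qu; lra.
  exact: (mix_lt0_cross Qv Qu hv hl (ltW fgv) (ltW gfu)).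
- by move: hu; rewrite mixE fgu subrr mulr0 addr0; have [] := fg_cover Qu; lra.
Qed.

End TwoConvexFunctions.

Section SimplexWeights.
Variables (R : realType) (N : nat).
Implicit Types (p v F : 'I_N -> R) (i j : 'I_N).

Lemma sum_supp1 p F i : (forall j, j != i -> p j = 0) ->
  \sum_l p l * F l = p i * F i.
Proof.
move=> p0; rewrite (bigD1 i) //= big1 ?addr0 // => l li.
by rewrite p0 ?mul0r.
Qed.

Lemma sum_two F i j : i != j ->
  \sum_l F l = F i + F j + \sum_(l | (l != i) && (l != j)) F l.
Proof.
by move=> ij; rewrite (bigD1 i) //= (bigD1 j) 1?eq_sym //= addrA.
Qed.

Definition split_weight p i j (lam : R) l :=
  if l == i then lam * p i else if l == j then (1 - lam) * p i + p j else p l.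

Lemma sum_split_weight p F i j lam : i != j ->
  \sum_l split_weight p i j lam l * F l =
  \sum_l p l * (if l == i then lam * F i + (1 - lam) * F j else F l).
Proof.
move=> ij; have ji : j != i by rewrite eq_sym.
rewrite !(sum_two _ ij) /split_weight !eqxx (negbTE ji).
under eq_bigr => l /andP[/negbTE -> /negbTE ->] do [].
under [in RHS]eq_bigr => l /andP[/negbTE -> _] do [].
ring.
Qed.

Lemma split_weight_simplex p i j lam : i != j -> 0 <= lam <= 1 ->
  in_simplex p -> in_simplex (split_weight p i j lam).
Proof.
move=> ij /andP[lam0 lam1] [p0 p1]; split.
  move=> l; rewrite /split_weight; case: ifP => _; first exact: mulr_ge0.
  by case: ifP => _ //; rewrite addr_ge0 ?mulr_ge0 ?subr_ge0.
transitivity (\sum_l split_weight p i j lam l * 1).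
  by apply: eq_bigr => l _; rewrite mulr1.
rewrite sum_split_weight // -[X in _ = X]p1; apply: eq_bigr => l _.
by case: ifP => _; ring.
Qed.

Lemma simplex_sum_le p v M : in_simplex p -> (forall j, v j <= M) ->
  \sum_j p j * v j <= M.
Proof.
move=> [p0 p1] vM; rewrite -[leRHS]mul1r -p1 mulr_suml.
by apply: ler_sum => j _; apply: ler_wpM2l.
Qed.

Lemma simplex_sum_eq p v M : in_simplex p -> (forall j, p j != 0 -> v j = M) ->
  \sum_j p j * v j = M.
Proof.
move=> [_ p1] vM; rewrite -[RHS]mul1r -p1 mulr_suml; apply: eq_bigr => j _.
by have [->|/vM->] := eqVneq (p j) 0; rewrite ?mul0r.
Qed.

Lemma simplex_pure p : in_simplex p -> ~ non_pure p ->
  exists i, p i = 1 /\ forall F, \sum_l p l * F l = F i.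
Proof.
move=> [p0 p1] pure.
have [i pi0] : exists i, 0 < p i.
  apply: contrapT => /forallNP p_le0; move: p1; rewrite big1 => [|l _].
    by move/eqP; rewrite eq_sym oner_eq0.
  by apply/eqP; rewrite eq_le p0 andbT leNgt; apply/negP/p_le0.
have p_supp l : l != i -> p l = 0.
  move=> li; apply/eqP; rewrite eq_le p0 andbT leNgt; apply/negP => pl0.
  by apply: pure; exists l, i.
have pi1 : p i = 1.
  by rewrite -p1 -[LHS]mulr1 -(sum_supp1 (fun=> 1) p_supp); under eq_bigr do rewrite mulr1.
by exists i; split=> // F; rewrite (sum_supp1 _ p_supp) pi1 mul1r.
Qed.


End SimplexWeights.

Section ConvexAlternative.
Variables (R : realType) (m N : nat) (G : {set 'I_N}) (f : 'I_N -> 'rV[R]_m -> R).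
Hypothesis f_convex : {in G, forall i, convex_fun (f i)}.
Hypothesis f_cover : forall u, exists2 i, i \in G & 0 <= f i u.

Lemma merge_cover i j : i \in G -> j \in G -> j != i ->
  exists2 lam, 0 <= lam <= 1 & forall u, exists2 l, l \in G :\ j &
    0 <= if l == i then lam * f i u + (1 - lam) * f j u else f l u.
Proof.
move=> iG jG ji.
pose Q : set 'rV[R]_m := fun u => forall l, l \in G :\ i :\ j -> f l u < 0.
have Q_convex u v t : 0 <= t <= 1 -> Q u -> Q v -> Q (t *: u + (1 - t) *: v).
  move=> t01 Qu Qv l /[dup] lGij; rewrite !inE => /and3P[_ _ lG].
  exact: convex_fun_lt0 (f_convex lG) t01 (Qu l lGij) (Qv l lGij).
have Q_cover u : Q u -> 0 <= f i u \/ 0 <= f j u.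
  move=> Qu; have [l lG fl] := f_cover u.
  have [<-|li] := eqVneq l i; first by left.
  have [<-|lj] := eqVneq l j; first by right.
  by have := Qu l; rewrite !inE li lj lG => /(_ isT); lra.
have [lam lam01 lam_ge0] :=
  convex_mix_ge0 (f_convex iG) (f_convex jG) Q_convex Q_cover.
exists lam => // u; case: (pselect (Q u)) => [Qu | /existsNP[l]].
  by exists i; rewrite ?eqxx ?lam_ge0 // !inE eq_sym ji.
move=> /not_implyP[+ /negP]; rewrite -leNgt !inE => /and3P[lj li lG] fl.
by exists l; rewrite ?(negbTE li) // !inE lj.
Qed.

End ConvexAlternative.

Lemma convex_alternative (R : realType) (m N : nat) (G : {set 'I_N})
    (f : 'I_N -> 'rV[R]_m -> R) :
  {in G, forall i, convex_fun (f i)} ->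
  (forall u, exists2 i, i \in G & 0 <= f i u) ->
  exists p, [/\ in_simplex p, forall i, i \notin G -> p i = 0
              & forall u, 0 <= \sum_i p i * f i u].
Proof.
move: f; have [k] := ubnP #|G|; elim: k G => // k IH G ltGk f f_convex f_cover.
have [i iG _] := f_cover 0.
have [j | Gi0] := pickP (fun l => l \in G :\ i); last first.
  have Gi l : l \in G -> l = i.
    move=> lG; apply/eqP; apply: contraT => li.
    by have := Gi0 l; rewrite /= !inE li lG.
  have delta_i l : l != i -> (l == i)%:R = 0 :> R by move/negbTE ->.
  exists (fun l => (l == i)%:R); split.
  - split=> [l|]; first exact: ler0n.
    by rewrite (bigD1 i) //= eqxx big1 ?addr0.
  - by move=> l lG; apply: delta_i; apply: contraNneq lG => ->.
  - move=> u; rewrite (sum_supp1 _ delta_i) eqxx mul1r.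
    by have [l /[dup] /Gi -> ] := f_cover u.
rewrite /= !inE => /andP[ji jG].
have [lam lam01 g_cover] := merge_cover f_convex f_cover iG jG ji.
pose g l u := if l == i then lam * f i u + (1 - lam) * f j u else f l u.
have ltGj : (#|G :\ j| < k)%N by move: ltGk; rewrite (cardsD1 j G) jG.
have g_convex : {in G :\ j, forall l, convex_fun (g l)}.
  move=> l; rewrite !inE => /andP[_ lG]; rewrite /g; case: eqP => _; last exact: f_convex.
  have /andP[lam0 lam1] := lam01.
  by apply: convex_fun_comb; rewrite ?subr_ge0 //; apply: f_convex.
have [p [p_simplex p_supp p_ge0]] := IH _ ltGj g g_convex g_cover.
exists (split_weight p i j lam); split.
- by apply: split_weight_simplex; rewrite // eq_sym.
- move=> l lG; have [li lj] : l != i /\ l != j.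
    by split; apply: contraNneq lG => ->.
  by rewrite /split_weight (negbTE li) (negbTE lj) p_supp // !inE negb_and lG orbT.
- by move=> u; rewrite sum_split_weight 1?eq_sym //; apply: p_ge0.
Qed.

Section OneStageGame.
Variables (R : realType) (n m K N : nat).
Variables (P : 'I_N -> 'M[R]_K) (q : 'I_K -> R).
Hypotheses (HP : forall a, row_stochastic (P a)) (Hq : forall j, 0 <= q j <= 1).

Lemma Pq_itv i s : 0 <= Pq P q i s <= 1.
Proof.
have [P0 P1] := HP i; apply/andP; split.
  by apply: sumr_ge0 => j _; apply: mulr_ge0 => //; case/andP: (Hq j).
rewrite /Pq -(P1 s); apply: ler_sum => j _.
by rewrite ler_piMr //; case/andP: (Hq j).
Qed.

Lemma hxs_convex (F : 'rV[R]_n -> 'rV[R]_m -> 'rV[R]_n)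
    (sigma0 : 'rV[R]_n -> 'rV[R]_m -> R) (sigma1 : 'rV[R]_n -> R)
    (g0 : 'I_N -> 'I_K -> R) x s i :
  convex_fun (fun u => Sigma sigma0 sigma1 g0 x s (F x u) u i) ->
  convex_fun (fun u => Sigma sigma0 sigma1 g0 x s (F x 0) u i) ->
  convex_fun (fun u => hxs P q F sigma0 sigma1 g0 x s u i).
Proof.
have /andP[Pq0 Pq1] := Pq_itv i s.
by apply: convex_fun_comb; rewrite ?subr_ge0.
Qed.

End OneStageGame.

Theorem theorem2 (R : realType) (n m K N : nat)
  (P : 'I_N -> 'M[R]_K) (q : 'I_K -> R)
  (F : 'rV[R]_n -> 'rV[R]_m -> 'rV[R]_n)
  (sigma0 : 'rV[R]_n -> 'rV[R]_m -> R) (sigma1 : 'rV[R]_n -> R)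
  (g0 : 'I_N -> 'I_K -> R)
  (HP : forall a, row_stochastic (P a))
  (Hq : forall j, 0 <= q j <= 1)
  (H0 : forall x s a,
     let f := fun u => Sigma sigma0 sigma1 g0 x s (F x 0) u a in
     continuous f /\ coercive f /\ convex_fun f)
  (H1 : forall x s a,
     let f := fun u => Sigma sigma0 sigma1 g0 x s (F x u) u a in
     continuous f /\ coercive f /\ convex_fun f)
  (x : 'rV[R]_n) (s : 'I_K) (us : 'rV[R]_m) (G : {set 'I_N}) :
  let H := hxs P q F sigma0 sigma1 g0 x s in
  (1 < #|G|)%N ->
  (forall i, i \in G -> forall j, H us j <= H us i) ->
  (forall u, u != us -> exists2 i, i \in G & H us i < H u i) ->
  (forall i, i \in G -> exists u, H u i < H us i) ->
  exists ps : 'I_N -> R, saddle_point H us ps /\ non_pure ps.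
Proof.
move=> H G2 H_max H_dom H_notmin.
have /card_gt0P[i0 i0G] := ltnW G2.
pose f k u := H u k - H us k.
have f_convex k : convex_fun (f k).
  by apply/convex_fun_addr/hxs_convex; [| | exact: (H1 x s k).2.2 | exact: (H0 x s k).2.2].
have f_cover u : exists2 k, k \in G & 0 <= f k u.
  have [->|/H_dom[k kG]] := eqVneq u us; first by exists i0; rewrite // /f subrr.
  by exists k; rewrite // /f subr_ge0 ltW.
have [p [p_simplex p_supp p_ge0]] := convex_alternative (in1W f_convex) f_cover.
have p_us : expected H p us = H us i0.
  apply: simplex_sum_eq => // j pj; have jG : j \in G.
    by apply: contraNT pj => /p_supp ->; rewrite eqxx.
  by apply/le_anti; rewrite H_max ?H_max.
exists p; split; first split; [done | split |].
- by move=> p' p'_simplex; rewrite p_us; apply: simplex_sum_le => // j; apply: H_max.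
- move=> u; rewrite -subr_ge0 /expected -sumrB.
  by under eq_bigr do rewrite -mulrBr; apply: p_ge0.
- apply: contrapT => /(simplex_pure p_simplex)[i [pi1 p_dirac]].
  have iG : i \in G.
    by apply: contraT => /p_supp; rewrite pi1 => /eqP; rewrite oner_eq0.
  by have [u] := H_notmin i iG; have := p_ge0 u; rewrite p_dirac /f; lra.
Qed.
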